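(* Let $S$ be a finite $p$-group, $\mathcal{A}$ a divisible $S$-algebra, and $\varphi:P\to Q$, $\psi:Q\to R$ isomorphisms of $\mathfrak{F}_S(\mathcal{A})$. If $u_\varphi\in\mathcal{A}(\varphi)$ is a twisted unit of $\varphi$ and $u_\psi\in\mathcal{A}(\psi)$ is a twisted unit of $\psi$, then $u_\psi u_\varphi\in\mathcal{A}(\psi\varphi)$ is a twisted unit of $\psi\varphi$.
   Context: $\mathcal{O}$ is a complete local noetherian domain with maximal ideal $\mathfrak{m}$ and algebraically closed residue field of characteristic $p$. An interior $S$-algebra is an $\mathcal{O}$-free finite-rank $\mathcal{O}$-algebra $\mathcal{A}$ with group homomorphism $S\to\mathcal{A}^\times$; it is bifree if it has an $\mathcal{O}$-basis $Y$ with $sY=Y=Ys$ ($s\in S$) on which left and right actions are free. For $P\le S$ and injective $\varphi:P\to S$, $\mathcal{A}(\varphi)$ is the Brauer quotient $\mathcal{A}^\Delta/(\mathfrak{m}\mathcal{A}^\Delta+\sum_{V<\Delta}\mathrm{tr}_V^\Delta\mathcal{A}^V)$ for $\Delta=\Delta(\varphi,P)=\{(\varphi(p),p)\}\le S\times S$ acting by $(s,t)a=sat^{-1}$, with quotient map $\mathrm{br}_\varphi$; $\mathcal{A}(P)=\mathcal{A}(\iota_P)$. Multiplication induces $\mathcal{A}(\psi)\times\mathcal{A}(\varphi)\to\mathcal{A}(\psi\varphi)$, $\mathrm{br}_\psi(a)\mathrm{br}_\varphi(c)=\mathrm{br}_{\psi\varphi}(ac)$. $\mathfrak{F}_S(\mathcal{A})$: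 objects subgroups of $S$, $\mathrm{Hom}(P,Q)=\{\varphi:P\to Q$ injective$:\mathcal{A}(\varphi)\ne0\}$; $\mathcal{A}$ is divisible if it is bifree and $\mathfrak{F}_S(\mathcal{A})$ contains all inclusions, is closed under composition, and each morphism is an inclusion composed with an isomorphism of $\mathfrak{F}_S(\mathcal{A})$. For an isomorphism $\varphi:P\to Q$ of $\mathfrak{F}_S(\mathcal{A})$, a twisted unit of $\varphi$ is $u\in\mathcal{A}(\varphi)$ such that there is $u^\dagger\in\mathcal{A}(\varphi^{-1})$ with $u^\dagger u=1_{\mathcal{A}(P)}$. *)

From HB Require Import structures.
From mathcomp Require Import all_boot all_order all_algebra all_fingroup all_solvable.
Set Implicit Arguments. Unset Strict Implicit. Unset Printing Implicit Defensive.
Import GRing.Theory.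
Local Open Scope ring_scope.

Section CoeffRing.
Variable O : idomainType.

Definition is_ideal (I : O -> Prop) : Prop :=
  I 0 /\ (forall x y, I x -> I y -> I (x + y)) /\ (forall r x, I x -> I (r * x)).

Definition noetherian : Prop :=
  forall I : O -> Prop, is_ideal I ->
    exists n (g : 'I_n -> O),
      forall x, I x <-> exists c : 'I_n -> O, x = \sum_(i < n) c i * g i.

Variable m : {pred O}.

Definition local_with_max : Prop :=
  is_ideal (fun x => x \in m) /\ forall x, (x \in m) = (x \isn't a GRing.unit).

Fixpoint mpow (n : nat) : O -> Prop :=
  match n with
  | 0%N => fun _ => True
  | n'.+1 => fun x => exists k (a b : 'I_k -> O),
      (forall i, a i \in m) /\ (forall i, mpow n' (b i)) /\
      x = \sum_(i < k) a i * b i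
  end.

(* O is m-adically complete (and separated). *)
Definition madic_complete : Prop :=
  (forall y, (forall n, mpow n y) -> y = 0) /\
  (forall x : nat -> O, (forall n, mpow n (x n.+1 - x n)) ->
     exists l, forall n, mpow n (l - x n)).

Definition residue_char (p : nat) : Prop := prime p /\ (p%:R : O) \in m.

(* residue field O/m is algebraically closed: every polynomial whose
   reduction mod m is non-constant has a root mod m.  (Every non-constant
   polynomial over O/m lifts to such an f with unit leading coefficient.) *)
Definition residue_alg_closed : Prop :=
  forall f : {poly O}, (1 < size f)%N -> lead_coef f \notin m ->
    exists x : O, f.[x] \in m.

End CoeffRing.

Section Brauer.
Variables (gT : finGroupType) (S : {group gT}).
Variables (O : idomainType) (m : {pred O}) (A : algType O).
Variable sigma : gT -> A.

Definition interior : Prop :=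
  sigma 1%g = 1 /\ {in S &, forall x y, sigma (x * y)%g = sigma x * sigma y}.

Definition is_Obasis (Y : seq A) : Prop :=
  (forall a : A, exists c : 'I_(size Y) -> O, a = \sum_(i < size Y) c i *: Y`_i) /\
  (forall c : 'I_(size Y) -> O,
     \sum_(i < size Y) c i *: Y`_i = 0 -> forall i, c i = 0).

Definition Ofree_finite : Prop := exists Y : seq A, is_Obasis Y.

Definition bifree : Prop :=
  exists Y : seq A, [/\ is_Obasis Y /\ uniq Y,
    (forall s, s \in S -> perm_eq [seq sigma s * y | y <- Y] Y),
    (forall s, s \in S -> perm_eq [seq y * sigma s | y <- Y] Y),
    (forall s y, s \in S -> y \in Y -> sigma s * y = y -> s = 1%g) &
    (forall s y, s \in S -> y \in Y -> y * sigma s = y -> s = 1%g)].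

Definition act (st : gT * gT) (a : A) : A := sigma st.1 * a * sigma (st.2^-1)%g.

Definition fixed (V : {set gT * gT}) (a : A) : Prop :=
  forall st, st \in V -> act st a = a.

Definition trace (V D : {set gT * gT}) (a : A) : A :=
  \sum_(C in lcosets V D) act (repr C) a.

(* the kernel  m A^D + sum_{V < D} tr_V^D A^V  of the Brauer quotient
   (we only ever apply it to elements of A^D) *)
Definition brker (D : {set gT * gT}) (a : A) : Prop :=
  exists n (ms : 'I_n -> O) (bs : 'I_n -> A) (c : {group gT * gT} -> A),
    [/\ forall i, ms i \in m,
        forall i, fixed D (bs i),
        forall V : {group gT * gT}, V \proper D -> fixed V (c V) &
        a = \sum_(i < n) ms i *: bs i
            + \sum_(V : {group gT * gT} | V \proper D) trace V D (c V)].

Definition Delta (phi : gT -> gT) (P : {set gT}) : {set gT * gT} :=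
  [set (phi x, x) | x in P].

(* A(phi) <> 0 : the Brauer quotient A^D / brker D is nonzero *)
Definition brauer_nonzero (phi : gT -> gT) (P : {set gT}) : Prop :=
  exists a, fixed (Delta phi P) a /\ ~ brker (Delta phi P) a.

Definition inj_hom (P : {set gT}) (phi : gT -> gT) : Prop :=
  {in P &, injective phi} /\ {in P &, {morph phi : x y / (x * y)%g}}.

Definition Fhom (P Q : {group gT}) (phi : gT -> gT) : Prop :=
  [/\ P \subset S, Q \subset S, inj_hom P phi, phi @: P \subset Q &
      brauer_nonzero phi P].

Definition Fiso (P Q : {group gT}) (phi : gT -> gT) : Prop :=
  [/\ Fhom P Q phi, phi @: P = Q &
      exists phinv, {in P, cancel phi phinv} /\ Fhom Q P phinv].

Definition divisible : Prop :=
  [/\ bifree,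
      (forall P Q : {group gT}, P \subset Q -> Q \subset S -> Fhom P Q id),
      (forall (P Q R : {group gT}) phi psi,
          Fhom P Q phi -> Fhom Q R psi -> Fhom P R (psi \o phi)) &
      (forall (P Q : {group gT}) phi, Fhom P Q phi ->
          exists P' : {group gT}, P' = phi @: P :> {set gT} /\ Fiso P P' phi)].

(* a (representative of a) twisted unit of the isomorphism phi : P -> Q:
   a in A^Delta(phi,P) and there is b in A^Delta(phi^-1,Q) with
   br(b) br(a) = 1 in A(P), i.e. b*a - 1 lies in the Brauer kernel for
   Delta(iota_P, P). *)
Definition twisted_unit (P Q : {group gT}) (phi : gT -> gT) (a : A) : Prop :=
  fixed (Delta phi P) a /\
  exists phinv, [/\ {in P, cancel phi phinv}, {in Q, cancel phinv phi} &
    exists b, fixed (Delta phinv Q) b /\ brker (Delta id P) (b * a - 1)].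

End Brauer.

From Pilot Require Import Defs.
From HB Require Import structures.
From mathcomp Require Import all_boot all_order all_algebra all_fingroup all_solvable.
Set Implicit Arguments. Unset Strict Implicit. Unset Printing Implicit Defensive.
Import GRing.Theory.
Local Open Scope ring_scope.

(* The product u_psi u_phi is Delta(psi phi)-fixed because the two twisting
   conditions compose, and its candidate inverse is b_phi b_psi, where b_phi, b_psi
   are the inverses of u_phi, u_psi modulo the Brauer kernels.  Indeed
     b_phi b_psi u_psi u_phi - 1 = b_phi (b_psi u_psi - 1) u_phi + (b_phi u_phi - 1).
   The second summand lies in the Brauer kernel of Delta(P) by hypothesis.  For the
   first, a |-> b_phi a u_phi is O-linear and intertwines the action of (y, z) in
   Q x Q with that of (phi^-1 y, phi^-1 z); such a map sends fixed points to fixed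
   points and relative traces to relative traces along the isomorphism
   Delta(Q) ~ Delta(P), hence the Brauer kernel of Delta(Q) into that of Delta(P). *)

Section BrauerKernel.

Variables (gT : finGroupType) (O : idomainType) (m : {pred O}) (A : algType O).
Variable sigma : gT -> A.

Lemma bimod_actD d : {morph Defs.act sigma d : a b / a + b}.
Proof. by move=> a b; rewrite /Defs.act mulrDr mulrDl. Qed.

Lemma bimod_act0 d : Defs.act sigma d 0 = 0.
Proof. by rewrite /Defs.act mulr0 mul0r. Qed.

Lemma fixed0 V : fixed sigma V 0.
Proof. by move=> d _; rewrite bimod_act0. Qed.

Lemma traceD V D : {morph trace sigma V D : a b / a + b}.
Proof.
by move=> a b; rewrite /trace -big_split; apply: eq_bigr => C _; rewrite bimod_actD.
Qed.

Lemma trace0 V D : trace sigma V D 0 = 0.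
Proof. by rewrite /trace big1 // => C _; rewrite bimod_act0. Qed.

Lemma brker0 D : brker m sigma D 0.
Proof.
exists 0%N, (fun _ => 0), (fun _ => 0), (fun _ => 0); split; try by case.
- by move=> V _; apply: fixed0.
by rewrite big_ord0 add0r big1 // => V _; rewrite trace0.
Qed.

Lemma brkerD D a b : brker m sigma D a -> brker m sigma D b -> brker m sigma D (a + b).
Proof.
move=> [n1 [ms1 [bs1 [c1 [ms1m bs1D c1V ->]]]]].
move=> [n2 [ms2 [bs2 [c2 [ms2m bs2D c2V ->]]]]].
pose cat T (f1 : 'I_n1 -> T) f2 (i : 'I_(n1 + n2)) :=
  match split i with inl j => f1 j | inr j => f2 j end.
exists (n1 + n2)%N, (cat _ ms1 ms2), (cat _ bs1 bs2), (fun V => c1 V + c2 V).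
split=> [i | i | V VD d dV |]; rewrite /cat.
- by case: split.
- by case: split.
- by rewrite bimod_actD c1V ?c2V.
apply: esym; rewrite big_split_ord /=.
have splitl (i : 'I_n1) : split (lshift n2 i) = inl i := unsplitK (inl i).
have splitr (i : 'I_n2) : split (rshift n1 i) = inr i := unsplitK (inr i).
under [\sum_(i < n1) _]eq_bigr do rewrite splitl.
under [\sum_(i < n2) _]eq_bigr do rewrite splitr.
rewrite (eq_bigr _ (fun V _ => traceD _ _ _ _)) big_split /=.
by rewrite addrACA.
Qed.

Lemma brkerZ D r b : r \in m -> fixed sigma D b -> brker m sigma D (r *: b).
Proof.
move=> rm Db; exists 1%N, (fun _ => r), (fun _ => b), (fun _ => 0); split=> //.
- by move=> V _; apply: fixed0.
by rewrite big_ord1 big1 ?addr0 // => V _; rewrite trace0.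
Qed.

Lemma brker_trace (D : {set gT * gT}) (W : {group gT * gT}) c :
  W \proper D -> fixed sigma W c -> brker m sigma D (trace sigma W D c).
Proof.
move=> WD Wc; exists 0%N, (fun _ => 0), (fun _ => 0), (fun V => if V == W then c else 0).
split; try by case.
- by move=> V _; case: eqP => [-> | _] //; apply: fixed0.
rewrite big_ord0 add0r (bigD1 W) //= eqxx big1 ?addr0 // => V /andP[_ /negbTE ->].
exact: trace0.
Qed.

End BrauerKernel.

Lemma imset_can_in (T : finType) (f g : T -> T) (P : {set T}) :
  {in P, cancel f g} -> g @: (f @: P) = P.
Proof. by move=> fK; rewrite -imset_comp (eq_in_imset fK) imset_id. Qed.

Lemma can_in_morph (gT : finGroupType) (P Q : {group gT}) (f g : gT -> gT) :
  {in P &, {morph f : x y / x * y}%g} -> {in P, cancel f g} ->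
  {in Q, cancel g f} -> g @: Q = P -> {in Q &, {morph g : x y / x * y}%g}.
Proof.
move=> fM fK gK gQP y z yQ zQ.
have gP x : x \in Q -> g x \in P by move=> xQ; rewrite -gQP imset_f.
by rewrite -{1}(gK y) // -{1}(gK z) // -fM ?gP // fK // groupM ?gP.
Qed.

Section InteriorAlgebra.

Variables (gT : finGroupType) (S : {group gT}) (O : idomainType) (A : algType O).
Variable sigma : gT -> A.
Hypothesis sigma_interior : interior S sigma.

Lemma sigma_mulVg x : x \in S -> sigma (x^-1)%g * sigma x = 1.
Proof.
by case: sigma_interior => sigma1 sigmaM xS; rewrite -sigmaM ?groupV // mulVg.
Qed.

Lemma bimod_actM : {in setX S S &, forall d e a,
  Defs.act sigma (d * e)%g a = Defs.act sigma d (Defs.act sigma e a)}.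
Proof.
case: sigma_interior => _ sigmaM [s t] [s' t'] /setXP[sS tS] /setXP[s'S t'S] a.
by rewrite /Defs.act /= invMg !sigmaM ?groupV // !mulrA.
Qed.

Lemma bimod_act_repr (V : {group gT * gT}) x a :
  V \subset setX S S -> x \in setX S S -> fixed sigma V a ->
  Defs.act sigma (repr (x *: V)%g) a = Defs.act sigma x a.
Proof.
move=> VS xS Va; have /lcosetP[v vV ->] := mem_repr _ (lcoset_refl V x).
by rewrite bimod_actM ?(Va v vV) // (subsetP VS).
Qed.

Lemma fixed_DeltaP (phi : gT -> gT) (P : {set gT}) a :
  fixed sigma (Delta phi P) a <->
  {in P, forall x, sigma (phi x) * a * sigma (x^-1)%g = a}.
Proof.
split=> [Pa x xP | Pa _ /imsetP[x xP ->]]; last exact: Pa.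
exact: (Pa (phi x, x) (imset_f _ xP)).
Qed.

Lemma fixed_Delta_comm (phi : gT -> gT) (P : {set gT}) a x :
  x \in P -> x \in S -> fixed sigma (Delta phi P) a ->
  sigma (phi x) * a = a * sigma x.
Proof.
move=> xP xS /fixed_DeltaP /(_ x xP) Ea.
by rewrite -{2}Ea -mulrA sigma_mulVg ?mulr1.
Qed.

Lemma fixed_Delta_commV (phi : gT -> gT) (P : {set gT}) a x :
  x \in P -> phi x \in S -> fixed sigma (Delta phi P) a ->
  sigma ((phi x)^-1)%g * a = a * sigma (x^-1)%g.
Proof.
move=> xP phixS /fixed_DeltaP /(_ x xP) Ea.
by rewrite -{1}Ea !mulrA sigma_mulVg ?mul1r.
Qed.

Lemma fixed_Delta_comp (phi psi : gT -> gT) (P Q : {set gT}) u v :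
  Q \subset S -> phi @: P \subset Q ->
  fixed sigma (Delta phi P) u -> fixed sigma (Delta psi Q) v ->
  fixed sigma (Delta (psi \o phi) P) (v * u).
Proof.
move=> QS phiPQ /fixed_DeltaP Pu /fixed_DeltaP Qv; apply/fixed_DeltaP => x xP.
have phixQ : phi x \in Q by rewrite (subsetP phiPQ) ?imset_f.
rewrite -{2}(Pu x xP) -{2}(Qv _ phixQ) /= !mulrA -(mulrA _ _ (sigma (phi x))).
by rewrite sigma_mulVg ?mulr1 // (subsetP QS).
Qed.

End InteriorAlgebra.

Section BrauerTransport.

Local Open Scope group_scope.
Local Open Scope ring_scope.

Variables (gT : finGroupType) (S : {group gT}).
Variables (O : idomainType) (m : {pred O}) (A : algType O) (sigma : gT -> A).
Hypothesis sigma_interior : interior S sigma.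
Variables (G : {group gT * gT}) (k : {morphism G >-> gT * gT}) (f : A -> A).
Hypotheses (k_inj : 'injm k) (sGS : G \subset setX S S) (skGS : k @* G \subset setX S S).
Hypotheses (fD : {morph f : a b / a + b}) (fZ : scalable f).
Hypothesis f_act :
  {in G, forall d a, f (Defs.act sigma d a) = Defs.act sigma (k d) (f a)}.

Let f0 : f 0 = 0. Proof. by have := fZ 0 0; rewrite !scale0r. Qed.

Lemma fixed_morphim (V : {set gT * gT}) c :
  fixed sigma V c -> fixed sigma (k @* V) (f c).
Proof. by move=> Vc _ /morphimP[d dG dV ->]; rewrite -f_act ?Vc. Qed.

Lemma trace_morphim (V : {group gT * gT}) (D : {set gT * gT}) c :
  V \subset G -> D \subset G -> fixed sigma V c ->
  f (trace sigma V D c) = trace sigma (k @* V) (k @* D) (f c).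
Proof.
move=> sVG sDG Vc.
have sxVG x : x \in D -> lcoset V x \subset G.
  by move=> xD; rewrite lcosetE -(lcoset_id (subsetP sDG x xD)) lcosetS.
have k_lcoset x : x \in D -> k @* lcoset V x = lcoset (k @* V) (k x).
  by move=> xD; rewrite !lcosetE morphimMl ?morphim_set1 ?sub1set ?(subsetP sDG).
rewrite /trace; have -> : lcosets (k @* V) (k @* D) = [set k @* C | C in lcosets V D].
  rewrite /lcosets (morphimEsub k sDG) -!imset_comp.
  by apply: eq_in_imset => x xD /=; rewrite k_lcoset.
rewrite [RHS]big_imset /=; last first.
  move=> _ _ /imsetP[x xD ->] /imsetP[y yD ->].
  by apply: (injm_morphim_inj k_inj); apply: sxVG.
rewrite (big_morph f fD f0); apply: eq_bigr => _ /imsetP[x xD ->].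
have xG := subsetP sDG x xD.
have xS : x \in setX S S := subsetP sGS x xG.
have kxS : k x \in setX S S := subsetP skGS _ (mem_morphim k xG xG).
have sVS : V \subset setX S S := subset_trans sVG sGS.
have skVS : k @* V \subset setX S S := subset_trans (morphimS k sVG) skGS.
rewrite k_lcoset // !lcosetE !(bimod_act_repr sigma_interior) ?f_act //.
exact: fixed_morphim.
Qed.

Lemma brker_morphim (D : {set gT * gT}) a :
  D \subset G -> brker m sigma D a -> brker m sigma (k @* D) (f a).
Proof.
move=> sDG [n [ms [bs [c [msm bsD cV ->]]]]].
rewrite fD !(big_morph f fD f0); apply: brkerD.
  apply: (big_ind (brker m sigma _)) => [|? ?|i _]; [exact: brker0 | exact: brkerD |].
  by rewrite fZ; apply: brkerZ => //; apply: fixed_morphim.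
apply: (big_ind (brker m sigma _)) => [|? ?|V VD]; [exact: brker0 | exact: brkerD |].
have sVG : V \subset G := subset_trans (proper_sub VD) sDG.
rewrite trace_morphim //; last exact: cV.
apply: (brker_trace _ _ (W := (k @* V)%G)); first by rewrite injm_proper.
exact/fixed_morphim/cV.
Qed.

End BrauerTransport.

Section DiagonalConjugation.

Local Open Scope group_scope.
Local Open Scope ring_scope.

Variables (gT : finGroupType) (S : {group gT}).
Variables (O : idomainType) (m : {pred O}) (A : algType O) (sigma : gT -> A).
Hypothesis sigma_interior : interior S sigma.

Lemma brker_Delta_conj (P Q : {group gT}) (phi phinv : gT -> gT) b u a :
  P \subset S -> Q \subset S -> {in Q, cancel phinv phi} -> phinv @: Q = P ->
  {in Q &, {morph phinv : x y / x * y}%g} ->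
  fixed sigma (Delta phinv Q) b -> fixed sigma (Delta phi P) u ->
  brker m sigma (Delta id Q) a -> brker m sigma (Delta id P) (b * a * u).
Proof.
move=> PS QS phinvK phinvQ phinvM Qb Pu.
have phinvP y : y \in Q -> phinv y \in P by move=> yQ; rewrite -phinvQ imset_f.
have phinvS y : y \in Q -> phinv y \in S by move/phinvP/(subsetP PS).
pose k (d : gT * gT) := (phinv d.1, phinv d.2).
have kM : {in setX Q Q &, {morph k : d e / d * e}%g}.
  by move=> [y1 y2] [z1 z2] /setXP[y1Q y2Q] /setXP[z1Q z2Q]; rewrite /k /= !phinvM.
pose kQ : {morphism setX Q Q >-> gT * gT} := Morphism kM.
have kQ_inj : 'injm kQ.
  apply/injmP => [[y1 y2] [z1 z2]] /setXP[y1Q y2Q] /setXP[z1Q z2Q] [E1 E2].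
  by rewrite -(phinvK y1) // -(phinvK y2) // E1 E2 !phinvK.
have sDeltaQ : Delta id Q \subset setX Q Q.
  by apply/subsetP => _ /imsetP[y yQ ->]; apply/setXP.
have kQ_Delta : kQ @* Delta id Q = Delta id P.
  by rewrite (morphimEsub kQ sDeltaQ) /Delta -phinvQ -!imset_comp.
rewrite -kQ_Delta.
apply: (brker_morphim (f := fun x => b * x * u) sigma_interior kQ_inj) => //.
- exact: setXS.
- apply/subsetP => _ /morphimP[[y z] _ /setXP[yQ zQ] ->].
  by apply/setXP; split; apply: phinvS.
- by move=> a1 a2; rewrite mulrDr mulrDl.
- by move=> r a1; rewrite -scalerAr -scalerAl.
move=> [y z] /setXP[yQ zQ] a1; rewrite /Defs.act /=.
have yS := subsetP QS y yQ; have zS := subsetP QS z zQ.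
have Eb := fixed_Delta_comm sigma_interior yQ yS Qb.
have := fixed_Delta_commV sigma_interior (phinvP z zQ) _ Pu; rewrite phinvK // => Eu.
by rewrite !mulrA Eb -!mulrA Eu.
Qed.

End DiagonalConjugation.

Theorem lemma5p3
  (O : idomainType) (m : {pred O}) (p : nat)
  (hnoeth : noetherian O) (hloc : local_with_max m) (hcomp : madic_complete m)
  (hchar : residue_char m p) (hclosed : residue_alg_closed m)
  (gT : finGroupType) (S : {group gT}) (hS : (p.-group S)%g)
  (A : algType O) (sigma : gT -> A)
  (hint : interior S sigma) (hfree : Ofree_finite A)
  (hdiv : divisible S m sigma)
  (P Q R : {group gT}) (phi psi : gT -> gT)
  (hphi : Fiso S m sigma P Q phi) (hpsi : Fiso S m sigma Q R psi)
  (uphi upsi : A)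
  (huphi : twisted_unit m sigma P Q phi uphi)
  (hupsi : twisted_unit m sigma Q R psi upsi) :
  twisted_unit m sigma P R (psi \o phi) (upsi * uphi).
Proof.
case: hphi => [[PS QS [_ phiM] _ _] phiPQ _].
case: hpsi => [[_ RS _ _ _] psiQR _].
case: huphi => Puphi [phinv [phiK phinvK [bphi [Qbphi ker_phi]]]].
case: hupsi => Qupsi [psinv [psiK psinvK [bpsi [Rbpsi ker_psi]]]].
have phinvQP : phinv @: Q = P by rewrite -phiPQ imset_can_in.
have psinvRQ : psinv @: R = Q by rewrite -psiQR imset_can_in.
have sphiPQ : phi @: P \subset Q by rewrite phiPQ.
have spsinvRQ : psinv @: R \subset Q by rewrite psinvRQ.
split; first exact: (fixed_Delta_comp hint QS sphiPQ Puphi Qupsi).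
exists (phinv \o psinv); split.
- by move=> x xP /=; rewrite psiK ?phiK // -phiPQ imset_f.
- by move=> z zR /=; rewrite phinvK ?psinvK // -psinvRQ imset_f.
exists (bphi * bpsi); split; first exact: (fixed_Delta_comp hint QS spsinvRQ Rbpsi Qbphi).
have -> : bphi * bpsi * (upsi * uphi) - 1 =
    bphi * (bpsi * upsi - 1) * uphi + (bphi * uphi - 1).
  by rewrite mulrBr mulrBl mulr1 !mulrA addrA subrK.
apply: brkerD ker_phi.
have phinvM := can_in_morph phiM phiK phinvK phinvQP.
exact: (brker_Delta_conj hint PS QS phinvK phinvQP phinvM Qbphi Puphi ker_psi).
Qed.
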